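(* If $\Bbbk$ is an algebraically closed field of characteristic zero, then $\mathcal O(\lambda)\cong\mathcal O(1)$ for all $\lambda\in\Bbbk^*$. If $\Bbbk=\mathbb R$, then $\mathcal O(\lambda)\cong\mathcal O(1)$ for $\lambda>0$ and $\mathcal O(\lambda)\cong\mathcal O(-1)$ for $\lambda<0$, but $\mathcal O(-1)\not\cong\mathcal O(1)$.
   Context: $\mathcal W$ is the Witt algebra over $\Bbbk$ with basis $L_n$ ($n\in\mathbb{Z}$) and $[L_n,L_m]=(n-m)L_{n+m}$. For $\lambda\in\Bbbk^*$, $\mathcal O(\lambda)$ is the subalgebra of $\mathcal W$ spanned by $L_n-\lambda^nL_{-n}$, $n\ge1$; $\mathcal O=\mathcal O(1)$. *)

From HB Require Import structures.
From mathcomp Require Import all_boot all_order all_algebra.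
From mathcomp Require Import reals.
Set Implicit Arguments. Unset Strict Implicit. Unset Printing Implicit Defensive.
Import Order.TTheory GRing.Theory Num.Theory.
Local Open Scope ring_scope.

(* The Witt algebra W over a field K, with basis L_n (n : int).
   An element sum_n a_n L_n (finitely many a_n nonzero) is represented by a
   pair of polynomials (p, q): a_n = p`_n for n >= 0 and a_{-(m+1)} = q`_m. *)
Definition W (K : fieldType) := ({poly K} * {poly K})%type.

Definition wcoef (K : fieldType) (x : W K) (n : int) : K :=
  match n with Posz m => x.1`_m | Negz m => x.2`_m end.

(* the element sum_{-M <= n < M} g n L_n *)
Definition wmk (K : fieldType) (M : nat) (g : int -> K) : W K :=
  (\poly_(i < M) g (Posz i), \poly_(i < M) g (Negz i)).

Definition L (K : fieldType) (n : int) : W K :=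
  wmk (`|n|%N.+1) (fun m => if m == n then 1 else 0).

Definition wbound (K : fieldType) (x : W K) : nat := maxn (size x.1) (size x.2).

(* Lie bracket [sum a_i L_i, sum b_j L_j] = sum_{i,j} a_i b_j (i - j) L_{i+j} *)
Definition wbracket (K : fieldType) (x y : W K) : W K :=
  let N := maxn (wbound x) (wbound y) in
  wmk (2 * N)%N (fun n =>
    \sum_(k < 2 * N)
      let i := (k%:Z - N%:Z)%R in
      ((i - (n - i))%:~R * wcoef x i * wcoef y (n - i))).

(* generators L_n - lambda^n L_{-n}, n >= 1 (indexed by n.-1) *)
Definition Ogen (K : fieldType) (lam : K) (m : nat) : W K :=
  L K (Posz m.+1) - lam ^+ m.+1 *: L K (- Posz m.+1).

Definition inO (K : fieldType) (lam : K) (x : W K) : Prop :=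
  exists (m : nat) (c : 'I_m -> K), x = \sum_(i < m) c i *: Ogen lam i.

(* O(a) and O(b) are isomorphic Lie algebras: a bijective linear map
   O(a) -> O(b) preserving the bracket (phi is given on all of W but only its
   restriction to O(a) matters). *)
Definition Oiso (K : fieldType) (a b : K) : Prop :=
  exists phi : W K -> W K,
    [/\ forall x, inO a x -> inO b (phi x),
        forall (c : K) x y, inO a x -> inO a y -> phi (c *: x + y) = c *: phi x + phi y,
        forall x y, inO a x -> inO a y -> phi (wbracket x y) = wbracket (phi x) (phi y),
        forall x y, inO a x -> inO a y -> phi x = phi y -> x = y &
        forall z, inO b z -> exists2 x, inO a x & phi x = z].

From HB Require Import structures.
From mathcomp Require Import all_boot all_order all_algebra.
From mathcomp Require Import reals.
From mathcomp Require Import zify ring lra.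
Import Order.TTheory GRing.Theory Num.Theory.
Local Open Scope ring_scope.
Set Implicit Arguments. Unset Strict Implicit. Unset Printing Implicit Defensive.

(* Rescaling [L_n |-> mu^n L_n] is an automorphism of W mapping the generators
   of O(b mu^2) to multiples of those of O(b); since every nonzero element of an
   algebraically closed field is a square, and every nonzero real is [+-] a square,
   this gives the isomorphisms.

   For O(-1) vs O(1), encode [sum_n a_n L_n] as the polynomial
   [sum_n a_n X^(n+K+1)]: the bracket becomes [P'Q - PQ'].  Every element of
   O(1) vanishes at [X = 1], and if [P], [Q] vanish there to orders [j+1], [k+1]
   with leading coefficients [a], [b], their bracket vanishes to order [j+k+1]
   with leading coefficient [(j-k) a b].  So if
   [[x,[x,y]] + r y = [[u,v],[u,y]] + [[u,w],y]] with [x, y, u, v, w] in O(1)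
   and [r > 0], then the right side vanishes to order [k+2] where [k+1] is the
   order of [y], whereas the leading coefficient of the left side at order [k+1]
   is [(k^2 a^2 + r) b]; hence [y = 0].  In O(-1) this relation holds with
   [r = 1024] and an explicit [y <> 0]. *)

(** * A polynomial model of the Witt algebra *)

Section WittPolynomial.
Variable F : fieldType.
Implicit Types (x y : W F) (n : int) (P Q : {poly F}).

Lemma wcoefD x y n : wcoef (x + y) n = wcoef x n + wcoef y n.
Proof. by case: n => m /=; rewrite coefD. Qed.

Lemma wcoefZ a x n : wcoef (a *: x) n = a * wcoef x n.
Proof. by case: n => m /=; rewrite coefZ. Qed.

Lemma wcoefN x n : wcoef (- x) n = - wcoef x n.
Proof. by case: n => m /=; rewrite coefN. Qed.

Lemma wcoef0 n : wcoef 0 n = 0 :> F.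
Proof. by case: n => m /=; rewrite coef0. Qed.

Lemma wcoefP x y : (forall n, wcoef x n = wcoef y n) -> x = y.
Proof.
case: x y => [p q] [p' q'] eq_xy; congr pair; apply/polyP => i.
  exact: (eq_xy (Posz i)).
exact: (eq_xy (Negz i)).
Qed.

Lemma wcoef_wmk M (g : int -> F) n :
  wcoef (wmk M g) n = if (- M%:Z <= n) && (n < M%:Z) then g n else 0.
Proof.
case: n => m /=; rewrite coef_poly.
  by case: ifP; case: ifP => //; lia.
by rewrite NegzE; case: ifP; case: ifP => //; lia.
Qed.

Lemma wcoef_L m n : wcoef (L F n) m = (m == n)%:R.
Proof.
rewrite /L wcoef_wmk; case: ifP => [_|]; first by case: eqP.
by case: eqP => // ->; lia.
Qed.

Definition wbounded K : pred (W F) := fun x => (wbound x <= K)%N.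

Lemma wboundedP K x : reflect (forall n, (n < - K%:Z) || (K%:Z <= n) -> wcoef x n = 0)
  (x \in wbounded K).
Proof.
apply: (iffP idP) => [|x0].
  rewrite unfold_in /wbound geq_max => /andP[s1 s2] [] m /= out.
    by apply: nth_default; apply: leq_trans s1 _; move: out; lia.
  by apply: nth_default; apply: leq_trans s2 _; move: out; rewrite NegzE; lia.
rewrite unfold_in /wbound geq_max; apply/andP; split; apply/leq_sizeP => j le_Kj.
  by apply: (x0 (Posz j)); lia.
by apply: (x0 (Negz j)); rewrite NegzE; lia.
Qed.

Fact wbounded_closed K : subsemimod_closed (wbounded K).
Proof.
split; [split|] => [|x y /wboundedP x0 /wboundedP y0|a x /wboundedP x0].
- by apply/wboundedP => n _; rewrite wcoef0.
- by apply/wboundedP => n out; rewrite wcoefD x0 ?y0 ?addr0.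
- by apply/wboundedP => n out; rewrite wcoefZ x0 ?mulr0.
Qed.
HB.instance Definition _ K := GRing.isSubmodClosed.Build F (W F) (wbounded K)
  (wbounded_closed K).

Lemma wbounded_wmk M (g : int -> F) : wmk M g \in wbounded M.
Proof. by rewrite unfold_in /wbound geq_max !size_poly. Qed.

Lemma wbounded_L n : L F n \in wbounded (`|n|.+1).
Proof. exact: wbounded_wmk. Qed.

Lemma wbounded_max K x y : x \in wbounded K -> y \in wbounded K ->
  (maxn (wbound x) (wbound y) <= K)%N.
Proof. by rewrite geq_max !unfold_in => -> ->. Qed.

Lemma wbounded_le K K' x : (K <= K')%N -> x \in wbounded K -> x \in wbounded K'.
Proof. by move=> le_KK' bx; rewrite unfold_in (leq_trans bx). Qed.

(* [L_n] is sent to [X^(n+K+1)]; the shift by [K + 1] keeps all exponents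
   positive on [wbounded K]. *)
Definition wpoly K x : {poly F} :=
  \sum_(k < 2 * K) wcoef x (k%:Z - K%:Z) *: 'X^(k.+1).

Fact wpoly_is_linear K : linear (wpoly K).
Proof.
move=> a x y; rewrite /wpoly scaler_sumr -big_split; apply: eq_bigr => k _.
by rewrite wcoefD wcoefZ scalerDl scalerA.
Qed.
HB.instance Definition _ K := GRing.isLinear.Build F (W F) {poly F} _ (wpoly K)
  (wpoly_is_linear K).

Lemma wpolyD K x y : wpoly K (x + y) = wpoly K x + wpoly K y.
Proof. exact: raddfD. Qed.

Lemma wpolyB K x y : wpoly K (x - y) = wpoly K x - wpoly K y.
Proof. exact: raddfB. Qed.

Lemma wpolyZ K a x : wpoly K (a *: x) = a *: wpoly K x.
Proof. exact: linearZ. Qed.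

Lemma coef0_wpoly K x : (wpoly K x)`_0 = 0.
Proof. by rewrite /wpoly coef_sum big1 // => k _; rewrite coefZ coefXn /= mulr0. Qed.

Lemma coefS_wpoly K x j :
  (wpoly K x)`_j.+1 = if (j < 2 * K)%N then wcoef x (j%:Z - K%:Z) else 0.
Proof.
rewrite /wpoly coef_sum; case: ltnP => [lt_jK|le_Kj].
  rewrite (bigD1 (Ordinal lt_jK)) //= coefZ coefXn eqxx mulr1 big1 ?addr0 //.
  move=> k /negbTE neq_kj; rewrite coefZ coefXn eqSS.
  suff -> : (j == k) = false by rewrite mulr0.
  by apply: contraFF neq_kj => /eqP eq_jk; apply/eqP/val_inj.
rewrite big1 // => k _; rewrite coefZ coefXn eqSS.
suff -> : (j == k) = false by rewrite mulr0.
by apply/negbTE; move: (ltn_ord k) le_Kj; lia.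
Qed.

Lemma wpoly_eq0 K x : x \in wbounded K -> wpoly K x = 0 -> x = 0.
Proof.
move=> /wboundedP x0 wx0; apply: wcoefP => n; rewrite wcoef0.
have [out|] := boolP ((n < - K%:Z) || (K%:Z <= n)); first exact: x0.
move=> inside; have := coefS_wpoly K x (absz (n + K%:Z)); rewrite wx0 coef0.
have -> : (absz (n + K%:Z)%R < 2 * K)%N by lia.
by have -> : (absz (n + K%:Z))%:Z - K%:Z = n by lia.
Qed.

Lemma wpoly_inj K : {in wbounded K &, injective (wpoly K)}.
Proof.
move=> x y bx byy eq_xy; apply/eqP; rewrite -subr_eq0; apply/eqP.
apply: (@wpoly_eq0 K); first exact: rpredB.
by rewrite wpolyB eq_xy subrr.
Qed.

Lemma wpoly_shift K d x : x \in wbounded K -> wpoly (K + d) x = 'X^d * wpoly K x.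
Proof.
move=> /wboundedP x0; apply/polyP => j; rewrite coefXnM.
case: j => [|j]; first by rewrite !coef0_wpoly; case: ifP.
rewrite !coefS_wpoly; case: (ltnP j.+1 d) => lt_jd.
  by case: ifP => _ //; rewrite x0 //; lia.
case e: (j.+1 - d)%N => [|i]; first by rewrite coef0_wpoly; case: ifP => _ //; rewrite x0 //; lia.
rewrite coefS_wpoly; case: ifP => lt1; case: ifP => lt2.
- by congr wcoef; lia.
- by rewrite x0 //; lia.
- lia.
- by [].
Qed.

Lemma wpoly_L K n : - K%:Z <= n < K%:Z -> wpoly K (L F n) = 'X^((absz (n + K%:Z)).+1).
Proof.
move=> n_in; have lt_nK : (absz (n + K%:Z)%R < 2 * K)%N by lia.
rewrite /wpoly (bigD1 (Ordinal lt_nK)) //= wcoef_L.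
have -> : (absz (n + K%:Z))%:Z - K%:Z == n by apply/eqP; lia.
rewrite scale1r big1 ?addr0 // => k neq_k; rewrite wcoef_L.
suff -> : (k%:Z - K%:Z == n) = false by rewrite scale0r.
by apply: contraNF neq_k => /eqP eq_k; apply/eqP/val_inj => /=; lia.
Qed.

Definition pbracket P Q := P^`() * Q - P * Q^`().

Lemma pbracket_shift d P Q :
  pbracket ('X^d * P) ('X^d * Q) = 'X^(d + d) * pbracket P Q.
Proof. by rewrite /pbracket !derivM derivXn exprD; ring. Qed.

Lemma pbracket_wpoly K x y : pbracket (wpoly K x) (wpoly K y) =
  \sum_(k < 2 * K) \sum_(l < 2 * K)
    ((k%:R - l%:R) * wcoef x (k%:Z - K%:Z) * wcoef y (l%:Z - K%:Z)) *: 'X^((k + l).+1).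
Proof.
have deriv_wpoly z : (wpoly K z)^`() =
    \sum_(k < 2 * K) (wcoef z (k%:Z - K%:Z) * k.+1%:R) *: 'X^k.
  rewrite /wpoly raddf_sum /=; apply: eq_bigr => k _.
  by rewrite derivZ derivXn -scaler_nat scalerA.
rewrite /pbracket !deriv_wpoly /wpoly mulr_suml [X in _ - X]mulr_suml -sumrB.
apply: eq_bigr => k _; rewrite mulr_sumr [X in _ - X]mulr_sumr -sumrB.
by apply: eq_bigr => l _; rewrite -!mul_polyC !exprS exprD; ring.
Qed.

Lemma wbracket_bounded K x y : x \in wbounded K -> y \in wbounded K ->
  wbracket x y \in wbounded (2 * K).
Proof.
move=> bx byy; apply: wbounded_le (wbounded_wmk _ _).
by rewrite leq_mul2l wbounded_max ?orbT.
Qed.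

Lemma wpoly_wbracket_max x y (N := maxn (wbound x) (wbound y)) :
  wpoly (2 * N) (wbracket x y) = pbracket (wpoly N x) (wpoly N y).
Proof.
have /wboundedP y0 : y \in wbounded N by rewrite unfold_in leq_maxr.
rewrite pbracket_wpoly /wpoly.
pose T (k m : nat) : {poly F} :=
  (((k%:Z - N%:Z) - ((m%:Z - (2 * N)%N%:Z) - (k%:Z - N%:Z)))%:~R
   * wcoef x (k%:Z - N%:Z) * wcoef y ((m%:Z - (2 * N)%N%:Z) - (k%:Z - N%:Z)))
  *: 'X^(m.+1).
transitivity (\sum_(m < 2 * (2 * N)) \sum_(k < 2 * N) T k m).
  apply: eq_bigr => m _; rewrite /wbracket -/N wcoef_wmk ifT ?scaler_suml //.
  by move: (ltn_ord m); lia.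
rewrite exchange_big /=; apply: eq_bigr => k _.
rewrite -(big_mkord xpredT (T k)); have lt_kN := ltn_ord k.
rewrite (@big_cat_nat _ _ _ k) //=; last by lia.
rewrite [X in _ + X](@big_cat_nat _ _ _ (k + 2 * N)) /=; [ | lia | lia].
have out_low : \sum_(0 <= m < k) T k m = 0.
  rewrite big_nat_cond big1 // => m /andP[/andP[_ lt_mk] _].
  by rewrite /T y0 ?mulr0 ?scale0r //; apply/orP; left; lia.
have out_high : \sum_(k + 2 * N <= m < 2 * (2 * N)) T k m = 0.
  rewrite big_nat_cond big1 // => m /andP[/andP[le_m _] _].
  by rewrite /T y0 ?mulr0 ?scale0r //; apply/orP; right; lia.
rewrite out_low out_high add0r addr0 -{1}(add0n k) big_addn addKn big_mkord.
apply: eq_bigr => l _; rewrite /T.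
have -> : (k%:Z - N%:Z) - (((l + k)%N%:Z - (2 * N)%N%:Z) - (k%:Z - N%:Z)) = k%:Z - l%:Z by lia.
have -> : ((l + k)%N%:Z - (2 * N)%N%:Z) - (k%:Z - N%:Z) = l%:Z - N%:Z by lia.
by rewrite intrB -!pmulrn addnC.
Qed.

Lemma wpoly_wbracket K x y : x \in wbounded K -> y \in wbounded K ->
  wpoly (2 * K) (wbracket x y) = pbracket (wpoly K x) (wpoly K y).
Proof.
move=> bx byy; set N := maxn (wbound x) (wbound y).
have le_NK : (N <= K)%N by rewrite wbounded_max.
have bxN : x \in wbounded N by rewrite unfold_in leq_maxl.
have byN : y \in wbounded N by rewrite unfold_in leq_maxr.
rewrite -(subnKC le_NK) mulnDr wpoly_shift; last exact: wbracket_bounded.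
by rewrite wpoly_wbracket_max -/N !wpoly_shift // pbracket_shift mul2n addnn.
Qed.

Fact pbracket_is_linear P : linear (pbracket P).
Proof. by move=> a Q R; rewrite /pbracket derivD derivZ -!mul_polyC; ring. Qed.
HB.instance Definition _ P := GRing.isLinear.Build F {poly F} {poly F} _ (pbracket P)
  (pbracket_is_linear P).

Lemma pbracketC P Q : pbracket Q P = - pbracket P Q.
Proof. by rewrite /pbracket; ring. Qed.

Lemma pbracketZ a b P Q : pbracket (a *: P) (b *: Q) = (a * b) *: pbracket P Q.
Proof. by rewrite /pbracket !derivZ -!mul_polyC polyCM; ring. Qed.

Lemma pbracket_comp q P Q :
  pbracket (P \Po q) (Q \Po q) = q^`() * (pbracket P Q \Po q).
Proof. by rewrite /pbracket !deriv_comp comp_polyB !comp_polyM; ring. Qed.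

Lemma pbracket_Xn (m n : nat) :
  pbracket 'X^(m.+1) 'X^(n.+1) = (m%:R - n%:R) *: 'X^((m + n).+1).
Proof.
rewrite /pbracket !derivXn /= -mul_polyC rmorphB /= !polyC_natr.
by rewrite [in RHS]exprS exprD !exprS; ring.
Qed.

Fact wbracket_is_linear x : linear (wbracket x).
Proof.
move=> a y z; set K := (wbound x + wbound y + wbound z)%N.
have bx : x \in wbounded K by rewrite unfold_in /K; lia.
have byy : y \in wbounded K by rewrite unfold_in /K; lia.
have bz : z \in wbounded K by rewrite unfold_in /K; lia.
apply: (@wpoly_inj (2 * K)).
- by apply: wbracket_bounded; rewrite ?rpredD ?rpredZ.
- by rewrite rpredD ?rpredZ ?wbracket_bounded.
by rewrite linearP /= !wpoly_wbracket ?rpredD ?rpredZ // linearP /= linearP.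
Qed.
HB.instance Definition _ x := GRing.isLinear.Build F (W F) (W F) _ (wbracket x)
  (wbracket_is_linear x).

Lemma wbracketC x y : wbracket y x = - wbracket x y.
Proof.
set K := (wbound x + wbound y)%N.
have bx : x \in wbounded K by rewrite unfold_in /K; lia.
have byy : y \in wbounded K by rewrite unfold_in /K; lia.
apply: (@wpoly_inj (2 * K)); rewrite ?rpredN ?wbracket_bounded //.
by rewrite raddfN /= !wpoly_wbracket // pbracketC.
Qed.

Lemma wbracketBr x y y' : wbracket x (y - y') = wbracket x y - wbracket x y'.
Proof. exact: linearB. Qed.

Lemma wbracketZr a x y : wbracket x (a *: y) = a *: wbracket x y.
Proof. exact: linearZ. Qed.

Lemma wbracketBl x x' y : wbracket (x - x') y = wbracket x y - wbracket x' y.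
Proof. by rewrite ![wbracket _ y]wbracketC raddfB /= opprD. Qed.

Lemma wbracketZl a x y : wbracket (a *: x) y = a *: wbracket x y.
Proof. by rewrite ![wbracket _ y]wbracketC linearZ /= scalerN. Qed.

Lemma wbracket_L i j : wbracket (L F i) (L F j) = (i - j)%:~R *: L F (i + j).
Proof.
set K := (absz i + absz j).+1.
have bi : L F i \in wbounded K by apply: wbounded_le (wbounded_L i); lia.
have bj : L F j \in wbounded K by apply: wbounded_le (wbounded_L j); lia.
have bij : L F (i + j) \in wbounded (2 * K) by apply: wbounded_le (wbounded_L _); lia.
apply: (@wpoly_inj (2 * K)); rewrite ?rpredZ ?wbracket_bounded //.
rewrite wpoly_wbracket // linearZ /= !wpoly_L; try lia.
rewrite pbracket_Xn !pmulrn -intrB; congr (_ *: 'X^_); [congr _%:~R|]; lia.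
Qed.

Lemma wbracket_Ogen lam i j : wbracket (Ogen lam i) (Ogen lam j) =
  (i%:R - j%:R) *: Ogen lam (i + j).+1
  - (i + j).+2%:R *: (lam ^+ j.+1 *: L F (i.+1%:Z - j.+1%:Z)
                       - lam ^+ i.+1 *: L F (j.+1%:Z - i.+1%:Z)).
Proof.
rewrite /Ogen !(wbracketBr, wbracketBl, wbracketZr, wbracketZl, wbracket_L).
have -> : Posz i.+1 + Posz j.+1 = Posz (i + j).+2 by lia.
have -> : - Posz i.+1 + Posz j.+1 = Posz j.+1 - Posz i.+1 by rewrite addrC.
have -> : - Posz i.+1 - Posz j.+1 = - Posz (i + j).+2 by lia.
have -> : lam ^+ (i + j).+2 = lam ^+ i.+1 * lam ^+ j.+1 by rewrite -exprD addnS.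
apply: wcoefP => n; rewrite !(wcoefD, wcoefZ, wcoefN, wcoef_L); ring.
Qed.

Lemma wbounded_Ogen lam i : Ogen lam i \in wbounded i.+2.
Proof. by rewrite rpredB ?rpredZ //; apply: wbounded_le (wbounded_L _); lia. Qed.

Lemma wpoly_Ogen K lam i : (i.+1 < K)%N ->
  wpoly K (Ogen lam i) = 'X^(K + i.+2) - lam ^+ i.+1 *: 'X^(K - i).
Proof.
move=> lt_iK; rewrite wpolyB wpolyZ !wpoly_L; try lia.
by congr ('X^_ - _ *: 'X^_); lia.
Qed.

End WittPolynomial.

Section Subalgebra.
Variables (F : fieldType) (lam : F).
Implicit Types (x y : W F).

Lemma inO0 : inO lam 0.
Proof. by exists 0%N, (fun _ => 0); rewrite big_ord0. Qed.

Lemma inOZ a x : inO lam x -> inO lam (a *: x).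
Proof.
case=> m [c ->]; exists m, (fun i => a * c i).
by rewrite scaler_sumr; apply: eq_bigr => i _; rewrite scalerA.
Qed.

Let padded m (c : 'I_m -> F) (k : nat) := if insub k is Some i then c i else 0.

Lemma sum_Ogen_widen m N (c : 'I_m -> F) : (m <= N)%N ->
  \sum_(i < m) c i *: Ogen lam i = \sum_(k < N) padded c k *: Ogen lam k.
Proof.
move=> le_mN; transitivity (\sum_(i < m) padded c i *: Ogen lam i).
  by apply: eq_bigr => i _; rewrite /padded valK.
rewrite (big_ord_widen N (fun k => padded c k *: Ogen lam k) le_mN) big_mkcond /=.
apply: eq_bigr => k _; case: ltnP => // le_mk.
by rewrite /padded insubN -?leqNgt // scale0r.
Qed.

Lemma inOD x y : inO lam x -> inO lam y -> inO lam (x + y).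
Proof.
case=> m [c ->] [n [d ->]]; exists (m + n)%N, (fun k => padded c k + padded d k).
rewrite (sum_Ogen_widen c (leq_addr n m)) (sum_Ogen_widen d (leq_addl m n)).
by rewrite -big_split; apply: eq_bigr => k _; rewrite scalerDl.
Qed.

Lemma inO_sum m (G : 'I_m -> W F) : (forall i, inO lam (G i)) -> inO lam (\sum_i G i).
Proof. by move=> OG; apply: (big_ind (inO lam)) => //; [exact: inO0 | exact: inOD]. Qed.

Lemma inO_Ogen i : inO lam (Ogen lam i).
Proof.
exists i.+1, (fun k => (k == i :> nat)%:R).
rewrite (bigD1 (Ordinal (ltnSn i))) //= eqxx scale1r big1 ?addr0 // => k neq_ki.
suff -> : (k == i :> nat) = false by rewrite scale0r.
by apply: contraNF neq_ki => /eqP eq_ki; apply/eqP/val_inj.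
Qed.

Lemma inO_Ldiff (a b : nat) :
  inO lam (lam ^+ b *: L F (a%:Z - b%:Z) - lam ^+ a *: L F (b%:Z - a%:Z)).
Proof.
wlog le_ba : a b / (b <= a)%N.
  move=> IH; case: (leqP b a) => [/IH //|/ltnW/IH/(inOZ (-1))].
  by rewrite scaleN1r opprB.
move: le_ba; rewrite leq_eqVlt => /orP[/eqP->|lt_ba]; first by rewrite subrr; exact: inO0.
have [d ->] : exists d, a = (b + d.+1)%N by exists (a - b.+1)%N; lia.
have -> : (b + d.+1)%N%:Z - b%:Z = Posz d.+1 by lia.
have -> : b%:Z - (b + d.+1)%N%:Z = - Posz d.+1 by lia.
by rewrite exprD -scalerA -scalerBr; apply/inOZ/inO_Ogen.
Qed.

Lemma inO_wbracket x y : inO lam x -> inO lam y -> inO lam (wbracket x y).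
Proof.
case=> m [c ->] [n [d ->]].
rewrite linear_sum /=; apply: inO_sum => j; rewrite wbracketZr; apply: inOZ.
rewrite wbracketC -scaleN1r; apply: inOZ.
rewrite linear_sum /=; apply: inO_sum => i; rewrite wbracketZr; apply: inOZ.
rewrite wbracket_Ogen -scaleNr; apply: inOD; apply: inOZ; [exact: inO_Ogen|].
exact: inO_Ldiff.
Qed.

End Subalgebra.

(** * Rescaling *)

Section Rescaling.
Variables (F : fieldType) (mu : F).
Hypothesis mu_neq0 : mu != 0.
Implicit Types (x y : W F).

Definition wrescale x : W F := wmk (wbound x) (fun n => mu ^ n * wcoef x n).

Lemma wcoef_wrescale x n : wcoef (wrescale x) n = mu ^ n * wcoef x n.
Proof.
rewrite wcoef_wmk; case: ifP => // outside.
have /wboundedP x0 : x \in wbounded (wbound x) by rewrite unfold_in.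
by rewrite x0 ?mulr0 //; move: outside; lia.
Qed.

Lemma wrescale_bounded K x : x \in wbounded K -> wrescale x \in wbounded K.
Proof. by move=> /wboundedP x0; apply/wboundedP => n out; rewrite wcoef_wrescale x0 ?mulr0. Qed.

Fact wrescale_is_linear : linear wrescale.
Proof.
move=> a x y; apply: wcoefP => n.
by rewrite !(wcoefD, wcoefZ, wcoef_wrescale) mulrDr mulrCA.
Qed.
HB.instance Definition _ := GRing.isLinear.Build F (W F) (W F) _ wrescale
  wrescale_is_linear.

Lemma wrescale_inj : injective wrescale.
Proof.
move=> x y eq_xy; apply: wcoefP => n; have := congr1 (fun z => wcoef z n) eq_xy.
by rewrite !wcoef_wrescale => /(mulfI (expfz_neq0 n mu_neq0)).
Qed.

Lemma wpoly_wrescale K x :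
  wpoly K (wrescale x) = mu ^- K.+1 *: (wpoly K x \Po (mu *: 'X)).
Proof.
rewrite /wpoly raddf_sum scaler_sumr; apply: eq_bigr => k _.
rewrite /= comp_polyZ rmorphXn /= comp_polyX exprZn wcoef_wrescale !scalerA.
congr (_ *: _); rewrite mulrAC; congr (_ * _).
have -> : k%:Z - K%:Z = k.+1%:Z + - K.+1%:Z by lia.
by rewrite expfzDr // -exprnN mulrC.
Qed.

Lemma wrescale_wbracket x y : wrescale (wbracket x y) = wbracket (wrescale x) (wrescale y).
Proof.
set K := (wbound x + wbound y)%N.
have bx : x \in wbounded K by rewrite unfold_in /K; lia.
have byy : y \in wbounded K by rewrite unfold_in /K; lia.
have [bx' by'] := (wrescale_bounded bx, wrescale_bounded byy).
apply: (@wpoly_inj _ (2 * K)); rewrite ?wrescale_bounded ?wbracket_bounded //.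
rewrite wpoly_wrescale !wpoly_wbracket // !wpoly_wrescale.
rewrite pbracketZ pbracket_comp derivZ derivX -scalerAl mul1r !scalerA.
congr (_ *: _); rewrite -!exprVn -exprD.
have -> : (K.+1 + K.+1 = (2 * K).+2)%N by lia.
by rewrite [in RHS]exprS mulrAC mulVf // mul1r.
Qed.

Lemma wrescale_Ogen a b i :
  a = b * mu ^+ 2 -> wrescale (Ogen a i) = mu ^+ i.+1 *: Ogen b i.
Proof.
move=> ->; apply: wcoefP => n.
rewrite wcoef_wrescale /Ogen !(wcoefD, wcoefN, wcoefZ, wcoef_L).
have mu_i_neq0 : mu ^+ i.+1 != 0 by rewrite expf_neq0.
have [->|_] := eqVneq n (Posz i.+1).
  by rewrite -exprnP /=; ring.
have [->|_] := eqVneq n (- Posz i.+1).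
  by rewrite -exprnN exprMn exprAC /=; field.
by rewrite /=; ring.
Qed.

Lemma Oiso_rescale a b : a = b * mu ^+ 2 -> Oiso a b.
Proof.
move=> ab; exists wrescale; split.
- move=> x [m [c ->]]; exists m, (fun i => c i * mu ^+ i.+1).
  rewrite linear_sum /=; apply: eq_bigr => i _.
  by rewrite linearZ /= (wrescale_Ogen _ ab) scalerA.
- by move=> c x y _ _; rewrite linearP.
- by move=> x y _ _; rewrite wrescale_wbracket.
- by move=> x y _ _ /wrescale_inj.
move=> z [m [c ->]]; exists (\sum_(i < m) (c i * mu ^- i.+1) *: Ogen a i).
  by exists m, (fun i => c i * mu ^- i.+1).
rewrite linear_sum /=; apply: eq_bigr => i _.
rewrite linearZ /= (wrescale_Ogen _ ab) scalerA -mulrA mulVf ?mulr1 //.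
exact: expf_neq0.
Qed.

End Rescaling.

(** * Vanishing at [X = 1] *)

Section VanishingAtOne.
Variable F : fieldType.
Implicit Types (x y : W F) (n : nat) (P Q : {poly F}).

Definition wsum_coef x := x.1.[1] + x.2.[1].

Fact wsum_coef_is_scalar : scalar wsum_coef.
Proof. by move=> a x y; rewrite /wsum_coef /= !hornerD !hornerZ; ring. Qed.
HB.instance Definition _ := GRing.isLinear.Build F (W F) F _ wsum_coef
  wsum_coef_is_scalar.

Lemma wsum_coefD x y : wsum_coef (x + y) = wsum_coef x + wsum_coef y.
Proof. exact: raddfD. Qed.

Lemma wsum_coefZ a x : wsum_coef (a *: x) = a * wsum_coef x.
Proof. exact: scalarZ. Qed.

Lemma horner1_wpoly K x : x \in wbounded K -> (wpoly K x).[1] = wsum_coef x.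
Proof.
rewrite unfold_in /wbound geq_max => /andP[s1 s2].
rewrite /wpoly horner_sum /wsum_coef (horner_coef_wide _ s1) (horner_coef_wide _ s2).
under eq_bigr do rewrite hornerZ hornerXn expr1n mulr1.
under [X in _ = X + _]eq_bigr do rewrite expr1n mulr1.
under [X in _ = _ + X]eq_bigr do rewrite expr1n mulr1.
rewrite mul2n -addnn big_split_ord /= addrC; congr (_ + _).
  by apply: eq_bigr => k _; have -> : (K + k)%N%:Z - K%:Z = Posz k by lia.
rewrite (reindex_inj rev_ord_inj) /=; apply: eq_bigr => k _.
by have -> : (K - k.+1)%N%:Z - K%:Z = Negz k by rewrite NegzE; move: (ltn_ord k); lia.
Qed.

Lemma wsum_coef_L (n : int) : wsum_coef (L F n) = 1.
Proof.
rewrite -(horner1_wpoly (wbounded_L F n)) wpoly_L ?hornerXn ?expr1n //; lia.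
Qed.

Lemma wsum_coef_Ogen lam i : wsum_coef (Ogen lam i) = 1 - lam ^+ i.+1.
Proof. by rewrite raddfB /= scalarZ /= !wsum_coef_L mulr1. Qed.

Lemma wsum_coef_O1 x : inO 1 x -> wsum_coef x = 0.
Proof.
case=> m [c ->]; rewrite raddf_sum /= big1 // => i _.
by rewrite scalarZ /= wsum_coef_Ogen expr1n subrr mulr0.
Qed.

Lemma pbracket_XsubC_mul (c : F) (j k : nat) P Q :
  pbracket (('X - c%:P) ^+ j.+1 * P) (('X - c%:P) ^+ k.+1 * Q) =
  ('X - c%:P) ^+ (j + k).+1 * ((j%:R - k%:R) *: (P * Q) + ('X - c%:P) * pbracket P Q).
Proof.
rewrite /pbracket !derivM !deriv_exp derivXsubC /= -mul_polyC rmorphB /= !polyC_natr.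
by rewrite !exprS exprD; ring.
Qed.

Lemma XsubC1_neq0 : 'X - 1 != 0 :> {poly F}.
Proof. by rewrite -polyC1 polyXsubC_eq0. Qed.

(* [x] vanishes at [X = 1] to order at least [n] with leading coefficient [v],
   so to order exactly [n] when [v != 0]. *)
Definition wlead1 K (n : nat) x v :=
  x \in wbounded K /\ exists2 A, wpoly K x = ('X - 1) ^+ n * A & A.[1] = v.

Lemma wlead1_le K K' n x v : (K <= K')%N -> wlead1 K n x v -> wlead1 K' n x v.
Proof.
move=> le_KK' [bx [A eA vA]]; split; first exact: wbounded_le bx.
exists ('X^(K' - K) * A); last by rewrite hornerM hornerXn expr1n mul1r.
by rewrite -{1}(subnKC le_KK') wpoly_shift // eA mulrCA.
Qed.

Lemma wlead1D K n x y a b :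
  wlead1 K n x a -> wlead1 K n y b -> wlead1 K n (x + y) (a + b).
Proof.
move=> [bx [A eA vA]] [byy [B eB vB]]; split; first exact: rpredD.
by exists (A + B); rewrite ?wpolyD ?eA ?eB ?mulrDr // hornerD vA vB.
Qed.

Lemma wlead1Z K n c x a : wlead1 K n x a -> wlead1 K n (c *: x) (c * a).
Proof.
move=> [bx [A eA vA]]; split; first exact: rpredZ.
by exists (c *: A); rewrite ?wpolyZ ?eA ?scalerAr // hornerZ vA.
Qed.

Lemma wlead1_wbracket K j k x y a b :
  wlead1 K j.+1 x a -> wlead1 K k.+1 y b ->
  wlead1 (2 * K) (j + k).+1 (wbracket x y) ((j%:R - k%:R) * a * b).
Proof.
move=> [bx [A eA vA]] [byy [B eB vB]]; split; first exact: wbracket_bounded.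
eexists; first by rewrite wpoly_wbracket // eA eB -polyC1 pbracket_XsubC_mul.
by rewrite hornerD hornerZ !hornerM hornerXsubC subrr mul0r addr0 vA vB mulrA.
Qed.

Lemma wlead1_succ K n x : wlead1 K n x 0 -> exists v, wlead1 K n.+1 x v.
Proof.
move=> [bx [A eA /rootP/factor_theorem[B eB]]]; exists B.[1]; split => //.
by exists B => //; rewrite eA eB polyC1 exprSr -mulrA [_ * B]mulrC.
Qed.

Lemma wlead1_pred K n x v : wlead1 K n.+1 x v -> wlead1 K n x 0.
Proof.
move=> [bx [A eA _]]; split => //; exists (('X - 1) * A).
  by rewrite eA exprSr mulrA.
by rewrite hornerM !hornerE subrr mul0r.
Qed.

Lemma wlead1_uniq K n x a b : wlead1 K n x a -> wlead1 K n x b -> a = b.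
Proof.
move=> [_ [A eA <-]] [_ [B eB <-]]; congr horner.
by apply: (mulfI (expf_neq0 n XsubC1_neq0)); rewrite -eA -eB.
Qed.

Lemma wlead1_O1 K x : inO 1 x -> x \in wbounded K -> exists a, wlead1 K 1 x a.
Proof.
move=> Ox bx; apply: wlead1_succ; split => //; exists (wpoly K x).
  by rewrite expr0 mul1r.
by rewrite horner1_wpoly // wsum_coef_O1.
Qed.

Lemma wlead1_exact K x : x != 0 -> inO 1 x -> x \in wbounded K ->
  exists k b, b != 0 /\ wlead1 K k.+1 x b.
Proof.
move=> x_neq0 Ox bx.
have wx_neq0 : wpoly K x != 0 by apply: contra x_neq0 => /eqP/(wpoly_eq0 bx)->.
have [[|k] [A]] := multiplicity_XsubC (wpoly K x) 1; rewrite wx_neq0 /= => A1_neq0 eA.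
  move: A1_neq0; rewrite expr0 mulr1 in eA.
  by rewrite -eA /root horner1_wpoly // wsum_coef_O1 // eqxx.
exists k, A.[1]; split => //; split => //.
by exists A; rewrite // eA polyC1 mulrC.
Qed.

End VanishingAtOne.

(** * O(-1) is not isomorphic to O(1) *)

Definition ad2_relation (F : fieldType) (r : F) (x y u v w : W F) :=
  wbracket x (wbracket x y) + r *: y =
  wbracket (wbracket u v) (wbracket u y) + wbracket (wbracket u w) y.

Lemma O1_ad2_relation (R : realFieldType) (r : R) (x y u v w : W R) : 0 < r ->
  inO 1 x -> inO 1 y -> inO 1 u -> inO 1 v -> inO 1 w ->
  ad2_relation r x y u v w -> y = 0.
Proof.
move=> r_gt0 Ox Oy Ou Ov Ow rel; apply/eqP; apply: contraT => y_neq0.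
pose K := (wbound x + wbound y + wbound u + wbound v + wbound w)%N.
have [bx byy bu bv bw] : [/\ x \in wbounded K, y \in wbounded K, u \in wbounded K,
    v \in wbounded K & w \in wbounded K] by split; rewrite unfold_in /K; lia.
have le_K2 : (K <= 2 * K)%N by lia.
have le_K4 : (K <= 2 * (2 * K))%N by lia.
have [k [b [b_neq0 ly]]] := wlead1_exact y_neq0 Oy byy.
have [a lx] := wlead1_O1 Ox bx.
have lhs := wlead1D (wlead1_wbracket (wlead1_le le_K2 lx) (wlead1_wbracket lx ly))
                    (wlead1Z r (wlead1_le le_K4 ly)).
have [? lu] := wlead1_O1 Ou bu.
have [? lv] := wlead1_O1 Ov bv.
have [? lw] := wlead1_O1 Ow bw.
have luv := wlead1_wbracket lu lv; rewrite subrr !mul0r in luv.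
have luw := wlead1_wbracket lu lw; rewrite subrr !mul0r in luw.
have [? luv2] := wlead1_succ luv.
have [? luw2] := wlead1_succ luw.
have rhs := wlead1D (wlead1_pred (wlead1_wbracket luv2 (wlead1_wbracket lu ly)))
                    (wlead1_pred (wlead1_wbracket luw2 (wlead1_le le_K2 ly))).
rewrite /ad2_relation in rel; rewrite rel in lhs.
have := wlead1_uniq lhs rhs; rewrite addr0.
have -> : (0%:R - (0 + k)%:R) * a * ((0%:R - k%:R) * a * b) + r * b =
          ((k%:R * a) ^+ 2 + r) * b by ring.
move/eqP; rewrite mulf_eq0 (negbTE b_neq0) orbF.
by rewrite gt_eqF // ltr_wpDl ?sqr_ge0.
Qed.

Section Witness.
Variable F : fieldType.
Local Notation e := (Ogen (-1 : F)).

Definition wit_x : W F := 4 *: e 0.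
Definition wit_y : W F := 10 *: e 0 + 5 *: e 2 + e 4.
Definition wit_v : W F := -5 *: e 1.
Definition wit_w : W F := 30 *: e 0 + (-30) *: e 2.

Lemma Ominus1_ad2_relation : ad2_relation 1024 wit_x wit_y (e 0) wit_v wit_w.
Proof.
have b6 i : (i < 5)%N -> e i \in wbounded 6.
  by move=> lt_i5; apply: wbounded_le (wbounded_Ogen _ _); lia.
have [bx byy bu bv bw] : [/\ wit_x \in wbounded 6, wit_y \in wbounded 6,
    e 0 \in wbounded 6, wit_v \in wbounded 6 & wit_w \in wbounded 6].
  by split; rewrite /wit_x /wit_y /wit_v /wit_w;
    do ![apply: b6 | apply: rpredD | apply: rpredZ].
have bx12 : wit_x \in wbounded (2 * 6) by apply: wbounded_le bx.
have by12 : wit_y \in wbounded (2 * 6) by apply: wbounded_le byy.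
have by24 : wit_y \in wbounded (2 * (2 * 6)) by apply: wbounded_le byy.
rewrite /ad2_relation; apply: (@wpoly_inj _ (2 * (2 * 6))).
- by rewrite rpredD ?rpredZ ?wbracket_bounded.
- by rewrite rpredD ?wbracket_bounded.
rewrite !wpolyD wpolyZ !wpoly_wbracket ?wbracket_bounded //.
rewrite /wit_x /wit_y /wit_v /wit_w !(wpoly_Ogen, wpolyB, wpolyD, wpolyZ) //.
(* Literal exponents give [ring] literal multiplicities; [derivM] comes last
   because it would match a power of ['X] by unfolding it into a product. *)
rewrite ?addnE ?subnE ?mulnE /=.
have derivXnS n : ('X^(n.+1))^`() = 'X^n *+ n.+1 :> {poly F} by rewrite derivXn.
rewrite /pbracket.
do ![rewrite !(derivXnS, derivMn, derivZ, derivN, derivB, derivD) | rewrite derivM].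
by rewrite -!mul_polyC; ring.
Qed.

Lemma wsum_coef_wit_y : wsum_coef wit_y = 32.
Proof.
rewrite /wit_y !(wsum_coef_Ogen, wsum_coefD, wsum_coefZ).
by rewrite !exprS expr0; ring.
Qed.

End Witness.

Section Transport.
Variables (F : fieldType) (a : F) (phi : W F -> W F).
Hypothesis phi_lin : forall (c : F) x y, inO a x -> inO a y ->
  phi (c *: x + y) = c *: phi x + phi y.
Hypothesis phi_hom : forall x y, inO a x -> inO a y ->
  phi (wbracket x y) = wbracket (phi x) (phi y).

Lemma Oiso_map0 : phi 0 = 0.
Proof.
have := phi_lin 1 (inO0 a) (inO0 a); rewrite !scale1r addr0 -{1}[phi 0]addr0.
by move/addrI/esym.
Qed.

Lemma Oiso_mapD x y : inO a x -> inO a y -> phi (x + y) = phi x + phi y.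
Proof. by move=> Ox Oy; rewrite -[x]scale1r phi_lin // !scale1r. Qed.

Lemma Oiso_mapZ c x : inO a x -> phi (c *: x) = c *: phi x.
Proof. by move=> Ox; rewrite -[c *: x]addr0 phi_lin ?Oiso_map0 ?addr0 //; exact: inO0. Qed.

Lemma ad2_relation_map r x y u v w :
  inO a x -> inO a y -> inO a u -> inO a v -> inO a w ->
  ad2_relation r x y u v w -> ad2_relation r (phi x) (phi y) (phi u) (phi v) (phi w).
Proof.
move=> Ox Oy Ou Ov Ow /(congr1 phi).
have Oxy := inO_wbracket Ox Oy; have Oxxy := inO_wbracket Ox Oxy.
have Ouv := inO_wbracket Ou Ov; have Ouy := inO_wbracket Ou Oy.
have Ouw := inO_wbracket Ou Ow; have Ory := inOZ r Oy.
have Ouvuy := inO_wbracket Ouv Ouy; have Ouwy := inO_wbracket Ouw Oy.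
by rewrite !Oiso_mapD ?Oiso_mapZ // !phi_hom.
Qed.

End Transport.

Lemma not_Oiso_Ominus1_O1 (R : realFieldType) : ~ Oiso (-1 : R) 1.
Proof.
case=> phi [phi_O phi_lin phi_hom phi_inj _].
have Oe := @inO_Ogen R (-1).
have [Ox Oy Ou Ov Ow] : [/\ inO (-1) (wit_x R), inO (-1) (wit_y R), inO (-1) (Ogen (-1 : R) 0),
    inO (-1) (wit_v R) & inO (-1) (wit_w R)].
  by split; rewrite /wit_x /wit_y /wit_v /wit_w; do ![exact: Oe | apply: inOD | apply: inOZ].
have phi_y0 : phi (wit_y R) = 0.
  apply: (O1_ad2_relation (ltr0Sn _ 1023) (phi_O _ Ox) (phi_O _ Oy) (phi_O _ Ou)
            (phi_O _ Ov) (phi_O _ Ow)).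
  exact: (ad2_relation_map phi_lin phi_hom Ox Oy Ou Ov Ow (Ominus1_ad2_relation R)).
have y0 : wit_y R = 0.
  by apply: (phi_inj _ _ Oy (inO0 _)); rewrite phi_y0 (Oiso_map0 phi_lin).
by have := wsum_coef_wit_y R; rewrite y0 raddf0 => /eqP; rewrite eq_sym pnatr_eq0.
Qed.

Lemma closed_field_sqrt (K : closedFieldType) (a : K) : exists mu : K, mu ^+ 2 = a.
Proof.
have [mu mu_root] := @solve_monicpoly K 2 (fun i => if i == 0%N then a else 0) isT.
exists mu; move: mu_root; rewrite !big_ord_recr big_ord0 /=.
by rewrite add0r mulr1 mul0r addr0.
Qed.

Theorem corollary4p23 :
  (forall (K : closedFieldType), [pchar K] =i pred0 ->
     forall lam : K, lam != 0 -> Oiso lam 1) /\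
  (forall (R : realType),
     (forall lam : R, 0 < lam -> Oiso lam 1) /\
     (forall lam : R, lam < 0 -> Oiso lam (-1)) /\
     ~ Oiso (-1 : R) 1).
Proof.
split=> [K _ lam lam_neq0 | R].
  have [mu mu2] := closed_field_sqrt lam.
  have mu_neq0 : mu != 0 by apply: contraNneq lam_neq0 => mu0; rewrite -mu2 mu0 expr0n.
  by apply: (Oiso_rescale mu_neq0); rewrite mul1r mu2.
split; [move=> lam lam_gt0 | split; [move=> lam lam_lt0 | exact: not_Oiso_Ominus1_O1]].
  apply: (@Oiso_rescale _ (Num.sqrt lam)); first by rewrite sqrtr_eq0 -ltNge.
  by rewrite mul1r sqr_sqrtr // ltW.
apply: (@Oiso_rescale _ (Num.sqrt (- lam))); first by rewrite sqrtr_eq0 -ltNge oppr_gt0.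
by rewrite sqr_sqrtr ?oppr_ge0 ?ltW // mulN1r opprK.
Qed.
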